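(* Let $T$ be a ranked monad on $\mathbf{Set}$. Then in the behaviour locale $\mathrm{LB}_0T$ the following hold for all sets $A,B$, $t\in TA$, $a\ne a'\in A$, $u\colon A\to TB$ and $b\in B$: $$\bigvee_{a\in A}[t\mapsto a]=\top,\qquad [t\gg\mathrm{return}\,a\mapsto a']=\bot,\qquad [t\mapsto a]\wedge[t\mathbin{\gg\!=}u\mapsto b]=[t\mapsto a]\wedge[t\gg u(a)\mapsto b].$$
   Context: A monad $T$ on $\mathbf{Set}$: sets $TA$, $\mathrm{return}\,a\in TA$, $\mathbin{\gg\!=}\colon TA\times(TB)^A\to TB$ satisfying $\mathrm{return}\,a\mathbin{\gg\!=}u=u(a)$, $t\mathbin{\gg\!=}\mathrm{return}=t$, $(t\mathbin{\gg\!=}u)\mathbin{\gg\!=}v=t\mathbin{\gg\!=}\lambda a.(u(a)\mathbin{\gg\!=}v)$; $t\gg s:=t\mathbin{\gg\!=}\lambda a.s$. Ranked: there is a regular cardinal $\kappa$ such that every $t\in TA$ equals $t'\mathbin{\gg\!=}\lambda i.\mathrm{return}\,f(i)$ for some $t'\in TI$, $|I|<\kappa$, $f\colon I\to A$. $2=\{0,1\}$. The behaviour locale $\mathrm{LB}_0T$ is the locale whose frame is presented by generators $[b]$ for $b\in T2$ subject to, for all sets $A,B$, $t\in TA$, $u\colon A\to TB$, $a\ne a'\in A$, $b\in B$: $[t\mapsto a]\wedge[t\mapsto a']=\bot$; $[t\gg\mathrm{return}\,a\mapsto a]=\top$; $[t\mathbin{\gg\!=}u\mapsto b]=\bigvee_{a\in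 A}[t\mapsto a]\wedge[t\gg u(a)\mapsto b]$. Here, for $s\in TC$ and $c\in C$, $[s\mapsto c]:=[s\mathbin{\gg\!=}\lambda c'.\mathrm{return}(\delta_c(c'))]$ with $\delta_c(c')=1$ if $c'=c$ and $0$ otherwise. *)

(* Sets are modelled by types; a monad on Set is a Kleisli triple. *)
From Stdlib Require Import ClassicalDescription FunctionalExtensionality.

Record Monad := {
  MT :> Type -> Type;
  ret : forall {A : Type}, A -> MT A;
  bind : forall {A B : Type}, MT A -> (A -> MT B) -> MT B;
  bind_ret_l : forall (A B : Type) (a : A) (u : A -> MT B), bind (ret a) u = u a;
  bind_ret_r : forall (A : Type) (t : MT A), bind t (fun a => ret a) = t;
  bind_assoc : forall (A B C : Type) (t : MT A) (u : A -> MT B) (v : B -> MT C),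
      bind (bind t u) v = bind t (fun a => bind (u a) v)
}.
Arguments ret {_ _} _.
Arguments bind {_ _ _} _ _.

Definition then_ {T : Monad} {A B : Type} (t : T A) (s : T B) : T B :=
  bind t (fun _ => s).

Definition card_lt (I K : Type) : Prop :=
  (exists f : I -> K, forall x y, f x = f y -> x = y) /\
  ~ (exists g : K -> I, forall x y, g x = g y -> x = y).

Definition regular_cardinal (K : Type) : Prop :=
  (exists f : nat -> K, forall x y, f x = f y -> x = y) /\
  forall (I : Type) (J : I -> Type),
    card_lt I K -> (forall i, card_lt (J i) K) -> card_lt {i : I & J i} K.

Definition ranked (T : Monad) : Prop :=
  exists K : Type, regular_cardinal K /\
    forall (A : Type) (t : T A),
      exists (I : Type) (t' : T I) (f : I -> A),
        card_lt I K /\ t = bind t' (fun i => ret (f i)).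

Record Frame := {
  carrier :> Type;
  le : carrier -> carrier -> Prop;
  le_refl : forall x, le x x;
  le_trans : forall x y z, le x y -> le y z -> le x z;
  le_antisym : forall x y, le x y -> le y x -> x = y;
  meet : carrier -> carrier -> carrier;
  meet_lb1 : forall x y, le (meet x y) x;
  meet_lb2 : forall x y, le (meet x y) y;
  meet_glb : forall x y z, le z x -> le z y -> le z (meet x y);
  top : carrier;
  top_max : forall x, le x top;
  sup : (carrier -> Prop) -> carrier;
  sup_ub : forall (S : carrier -> Prop) x, S x -> le x (sup S);
  sup_least : forall (S : carrier -> Prop) y, (forall x, S x -> le x y) -> le (sup S) y;
  meet_sup_distr : forall x (S : carrier -> Prop),
      meet x (sup S) = sup (fun y => exists s, S s /\ y = meet x s)
}.
Arguments meet {_} _ _.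
Arguments top {_}.
Arguments sup {_} _.

Definition bot {L : Frame} : L := sup (fun _ => False).

Definition bigjoin {L : Frame} {A : Type} (f : A -> L) : L :=
  sup (fun y => exists a, y = f a).

Definition frame_hom {L M : Frame} (h : L -> M) : Prop :=
  (forall x y, h (meet x y) = meet (h x) (h y)) /\
  h top = top /\
  (forall S : L -> Prop, h (sup S) = sup (fun y => exists x, S x /\ y = h x)).

(** 2 = {0,1} is modelled by bool (0 = false, 1 = true). *)
Definition delta {C : Type} (c c' : C) : bool :=
  if excluded_middle_informative (c' = c) then true else false.

Definition mapsto {T : Monad} {L : Frame} (g : T bool -> L) {C : Type}
  (s : T C) (c : C) : L :=
  g (bind s (fun c' => ret (delta c c'))).

Definition LB0_relations (T : Monad) (L : Frame) (g : T bool -> L) : Prop :=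
  (forall (A : Type) (t : T A) (a a' : A), a <> a' ->
      meet (mapsto g t a) (mapsto g t a') = bot) /\
  (forall (A : Type) (t : T A) (a : A),
      mapsto g (then_ t (ret a)) a = top) /\
  (forall (A B : Type) (t : T A) (u : A -> T B) (b : B),
      mapsto g (bind t u) b =
      bigjoin (fun a : A => meet (mapsto g t a) (mapsto g (then_ t (u a)) b))).

(** (L, eta) is the frame presented by generators [b], b in T 2, subject to the
    relations above (universal property of a frame presentation). *)
Definition presents_LB0 (T : Monad) (L : Frame) (eta : T bool -> L) : Prop :=
  LB0_relations T L eta /\
  forall (M : Frame) (g : T bool -> M), LB0_relations T M g ->
    exists h : L -> M,
      frame_hom h /\ (forall b, h (eta b) = g b) /\
      (forall h' : L -> M, frame_hom h' -> (forall b, h' (eta b) = g b) ->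
         forall x, h' x = h x).

(* All three identities already hold in any frame with an assignment of the
   generators satisfying the defining relations.  Instantiating the bind
   relation at the constant continuation [return tt], whose [t >> return tt |-> tt]
   is [top], shows that the [t |-> a] cover [top]; the first relation applied to
   [t >> return a] (which maps to [a] with value [top]) forces the other values to
   [bot]; and meeting the bind relation with [t |-> a] kills every summand except
   the one at [a], by disjointness. *)
From Stdlib Require Import FunctionalExtensionality ClassicalDescription.

Section FrameFacts.
Variable L : Frame.

Lemma meet_top_r (x : L) : meet x top = x.
Proof.
  apply le_antisym; [apply meet_lb1|].
  apply meet_glb; [apply le_refl|apply top_max].
Qed.

Lemma meet_top_l (x : L) : meet top x = x.
Proof.
  apply le_antisym; [apply meet_lb2|].
  apply meet_glb; [apply top_max|apply le_refl].
Qed.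

Lemma bot_le (x : L) : le L bot x.
Proof. apply sup_least. intros _ []. Qed.

Lemma meet_bigjoin_disjoint {A : Type} (f h : A -> L) (a : A) :
  (forall a', a <> a' -> meet (f a) (f a') = bot) ->
  meet (f a) (bigjoin (fun a' => meet (f a') (h a'))) = meet (f a) (h a).
Proof.
  intros Hdisj. apply le_antisym.
  - unfold bigjoin. rewrite meet_sup_distr.
    apply sup_least. intros y [s [[a' ->] ->]].
    destruct (excluded_middle_informative (a = a')) as [<-|Hne].
    + apply meet_glb; [apply meet_lb1|].
      eapply le_trans; [apply meet_lb2|apply meet_lb2].
    + eapply le_trans; [|apply bot_le].
      rewrite <- (Hdisj a' Hne).
      apply meet_glb; [apply meet_lb1|].
      eapply le_trans; [apply meet_lb2|apply meet_lb1].
  - apply meet_glb; [apply meet_lb1|].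
    apply sup_ub. exists a. reflexivity.
Qed.

End FrameFacts.

Lemma then_assoc {T : Monad} {A B C : Type} (t : T A) (s : T B) (r : T C) :
  then_ (then_ t s) r = then_ t (then_ s r).
Proof. apply bind_assoc. Qed.

Lemma then_ret_l {T : Monad} {A B : Type} (a : A) (s : T B) :
  then_ (ret a) s = s.
Proof. apply bind_ret_l. Qed.

Section LB0Consequences.
Variables (T : Monad) (L : Frame) (g : T bool -> L).
Hypothesis Hg : LB0_relations T L g.

Lemma mapsto_then_ret_top {A C : Type} (t : T A) (c : C) :
  mapsto g (then_ t (ret c)) c = top.
Proof.
  destruct Hg as [_ [Hret _]].
  rewrite <- (Hret C (then_ t (ret c)) c), then_assoc, then_ret_l.
  reflexivity.
Qed.

Lemma bigjoin_mapsto_top {A : Type} (t : T A) :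
  bigjoin (fun a : A => mapsto g t a) = top.
Proof.
  destruct Hg as [_ [_ Hbind]].
  rewrite <- (mapsto_then_ret_top t tt).
  unfold then_ at 1. rewrite Hbind.
  f_equal. apply functional_extensionality. intros a.
  rewrite mapsto_then_ret_top. symmetry. apply meet_top_r.
Qed.

Lemma mapsto_then_ret_neq {A : Type} (t : T A) (a a' : A) :
  a <> a' -> mapsto g (then_ t (ret a)) a' = bot.
Proof.
  destruct Hg as [Hdisj _]. intros Hne.
  rewrite <- (Hdisj A (then_ t (ret a)) a a' Hne), mapsto_then_ret_top.
  symmetry. apply meet_top_l.
Qed.

Lemma meet_mapsto_bind {A B : Type} (t : T A) (u : A -> T B) (a : A) (b : B) :
  meet (mapsto g t a) (mapsto g (bind t u) b) =
  meet (mapsto g t a) (mapsto g (then_ t (u a)) b).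
Proof.
  destruct Hg as [Hdisj [_ Hbind]].
  rewrite Hbind.
  apply (meet_bigjoin_disjoint L (mapsto g t) (fun a' => mapsto g (then_ t (u a')) b)).
  apply Hdisj.
Qed.

End LB0Consequences.

Theorem proposition3p2 (T : Monad) (HT : ranked T)
  (L : Frame) (eta : T bool -> L) (HL : presents_LB0 T L eta) :
  (forall (A : Type) (t : T A), bigjoin (fun a : A => mapsto eta t a) = top) /\
  (forall (A : Type) (t : T A) (a a' : A), a <> a' ->
      mapsto eta (then_ t (ret a)) a' = bot) /\
  (forall (A B : Type) (t : T A) (u : A -> T B) (a : A) (b : B),
      meet (mapsto eta t a) (mapsto eta (bind t u) b) =
      meet (mapsto eta t a) (mapsto eta (then_ t (u a)) b)).
Proof.
  destruct HL as [Hrel _].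
  split; [|split].
  - intros A t. exact (bigjoin_mapsto_top T L eta Hrel t).
  - intros A t a a'. exact (mapsto_then_ret_neq T L eta Hrel t a a').
  - intros A B t u a b. exact (meet_mapsto_bind T L eta Hrel t u a b).
Qed.
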